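(* For any finite simple graphs $G$ and $H$ without isolated vertices and each of order at least three, $$\gamma_{tR}(G\times H)\ge \max\left\{\frac{\rho_o(H)\gamma_{tR}(G)}{2},\frac{\rho_o(G)\gamma_{tR}(H)}{2}\right\}.$$
   Context: An open packing of $G$ is a set $D$ of vertices with $N(u)\cap N(v)=\emptyset$ for all distinct $u,v\in D$ (open neighborhoods); $\rho_o(G)$ is the maximum size of an open packing. A total Roman dominating function on $G$ is a map $f:V(G)\to\{0,1,2\}$ such that every vertex with label 0 has a neighbor with label 2 and the subgraph induced by vertices with positive labels has no isolated vertices; $\gamma_{tR}(G)$ is the minimum of $\sum_v f(v)$ over such $f$. The direct product $G\times H$ has vertex set $V(G)\times V(H)$, with $(g,h)(g',h')$ an edge iff $gg'\in E(G)$ and $hh'\in E(H)$. *)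

From HB Require Import structures.
From mathcomp Require Import all_boot all_order all_algebra.
Set Implicit Arguments. Unset Strict Implicit. Unset Printing Implicit Defensive.

Record sgraph := SGraph {
  svert :> finType;
  sadj : rel svert;
  sadj_sym : symmetric sadj;
  sadj_irr : irreflexive sadj }.

Definition N (G : sgraph) (v : G) : {set G} := [set u | sadj v u].

Definition no_isolated (G : sgraph) : Prop := forall v : G, exists u, sadj v u.

Definition dprod_adj (G H : sgraph) : rel (svert G * svert H)%type :=
  fun x y => @sadj G x.1 y.1 && @sadj H x.2 y.2.

Lemma dprod_adj_sym G H : symmetric (@dprod_adj G H).
Proof. by move=> x y; rewrite /dprod_adj (@sadj_sym G) (@sadj_sym H). Qed.

Lemma dprod_adj_irr G H : irreflexive (@dprod_adj G H).
Proof. by move=> x; rewrite /dprod_adj (@sadj_irr G). Qed.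

Definition gdprod (G H : sgraph) : sgraph :=
  @SGraph (svert G * svert H)%type (@dprod_adj G H) (@dprod_adj_sym G H) (@dprod_adj_irr G H).

Definition open_packing (G : sgraph) (D : {set G}) : bool :=
  [forall u in D, forall v in D, (u != v) ==> [disjoint N u & N v]].

Definition rho_o (G : sgraph) : nat :=
  \max_(D : {set G} | open_packing D) #|D|.

Definition is_TRDF (G : sgraph) (f : {ffun G -> 'I_3}) : bool :=
  [forall v, (nat_of_ord (f v) == 0%N) ==> [exists u, sadj v u && (nat_of_ord (f u) == 2%N)]]
  && [forall v, (0 < f v)%N ==> [exists u, sadj v u && (0 < f u)%N]].

Definition weight (G : sgraph) (f : {ffun G -> 'I_3}) : nat := \sum_(v : G) nat_of_ord (f v).

(* gamma_tR = minimum weight of a TRDF.  The initial value 2|V| is the weight of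
   the constant-2 function, which is a TRDF whenever G has no isolated vertex. *)
Definition gamma_tR (G : sgraph) : nat :=
  \big[minn/(2 * #|G|)%N]_(f : {ffun G -> 'I_3} | is_TRDF f) weight f.

From HB Require Import structures.
From mathcomp Require Import all_boot all_order all_algebra.
Import Order.TTheory GRing.Theory Num.Theory.

Set Implicit Arguments.
Unset Strict Implicit.
Unset Printing Implicit Defensive.

(* Let f be a total Roman dominating function of G x H and D an open packing
   of H.  Every h in D induces a TRDF f_h of G: label g with 2 when some
   (g, h'), h' in N(h), has a positive f-label, and with 0 otherwise.  Since
   every (g, h) has a positively labelled neighbour (g', h'), every g has a
   neighbour labelled 2 under f_h.  The weight of f_h is at most twice the
   f-weight of G x N(h), and the sets N(h), h in D, are pairwise disjoint, so
   |D| gamma_tR(G) <= 2 w(f).  The second bound follows from G x H = H x G. *)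

(* Lets [bigD1] split the [minn]-indexed minimum defining [gamma_tR]. *)
HB.instance Definition _ := SemiGroup.isComLaw.Build nat minn minnA minnC.

Lemma gamma_tR_le_weight (G : sgraph) (f : {ffun G -> 'I_3}) :
  is_TRDF f -> gamma_tR G <= weight f.
Proof. by move=> TRf; rewrite /gamma_tR (bigD1 f) //= geq_minl. Qed.

Lemma gamma_tR_le_2card (G : sgraph) : gamma_tR G <= 2 * #|G|.
Proof.
rewrite /gamma_tR; elim/big_ind: _ => // [m n|f _]; first by rewrite geq_min => ->.
rewrite /weight mulnC -sum_nat_const.
by apply: leq_sum => v _; rewrite -ltnS ltn_ord.
Qed.

Lemma gamma_tR_attained (G : sgraph) :
  gamma_tR G = 2 * #|G| \/
  exists2 f : {ffun G -> 'I_3}, is_TRDF f & gamma_tR G = weight f.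
Proof.
rewrite /gamma_tR; elim/big_ind: _ => [|m n|f TRf]; [by left | | by right; exists f].
by rewrite /minn; case: ifP.
Qed.

Lemma open_packing0 (G : sgraph) : open_packing (set0 : {set G}).
Proof. by apply/forallP => u; rewrite in_set0. Qed.

Lemma rho_o_attained (G : sgraph) :
  exists2 D : {set G}, open_packing D & rho_o G = #|D|.
Proof.
have packings_gt0 : 0 < #|[pred D : {set G} | open_packing D]|.
  by apply/card_gt0P; exists set0; exact: open_packing0.
have [D opD rhoD] := eq_bigmax_cond (fun D : {set G} => #|D|) packings_gt0.
by exists D.
Qed.

Lemma TRDF_pos_neighbour (G : sgraph) (f : {ffun G -> 'I_3}) :
  is_TRDF f -> forall v, exists2 u, sadj v u & 0 < f u.
Proof.
case/andP=> /forallP zero_dom /forallP pos_dom v.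
have [fv0 | fv_gt0] := posnP (f v).
  move: (zero_dom v); rewrite fv0 => /existsP [u /andP [vu /eqP fu2]].
  by exists u => //; rewrite fu2.
by have /existsP [u /andP [vu fu_gt0]] := implyP (pos_dom v) fv_gt0; exists u.
Qed.

Lemma TRDF_of_max_neighbour (G : sgraph) (f : {ffun G -> 'I_3}) :
  (forall v, exists2 u, sadj v u & f u = ord_max) -> is_TRDF f.
Proof.
move=> max_nb; apply/andP; split; apply/forallP => v; apply/implyP => _;
  by have [u vu fu] := max_nb v; apply/existsP; exists u; rewrite vu fu.
Qed.

Lemma open_packingP (G : sgraph) (D : {set G}) :
  open_packing D -> {in D &, forall v w u, sadj v u -> sadj w u -> v = w}.
Proof.
move=> /forall_inP opD v w Dv Dw u vu wu; apply/eqP/negPn/negP => vw.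
have /implyP/(_ vw)/disjointFr := forall_inP (opD v Dv) w Dw.
by move=> /(_ u); rewrite !inE vu wu => /(_ isT).
Qed.

Lemma sum_open_packing_neighbourhoods (G : sgraph) (D : {set G}) (F : G -> nat) :
  open_packing D -> \sum_(v in D) \sum_(u in N v) F u <= \sum_u F u.
Proof.
move=> opD; rewrite (exchange_big_dep predT) //=; apply: leq_sum => u _.
rewrite sum_nat_cond_const -[leqRHS]mul1n leq_mul2r; apply/orP; right.
apply/card_le1_eqP => v w; rewrite !inE => /andP [Dv uv] /andP [Dw uw].
exact: (open_packingP opD Dw Dv uw uv).
Qed.

Section InducedLabelling.
Variables (G H : sgraph) (f : {ffun gdprod G H -> 'I_3}).

Definition induced_labelling (h : H) : {ffun G -> 'I_3} :=
  [ffun g => if [exists h' in N h, 0 < f (g, h')] then ord_max else ord0].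

Lemma induced_labelling_TRDF h : is_TRDF f -> is_TRDF (induced_labelling h).
Proof.
move=> TRf; apply: TRDF_of_max_neighbour => g.
have [[g' h'] /andP [/= gg' hh'] f_gt0] := TRDF_pos_neighbour TRf (g, h).
exists g' => //; rewrite ffunE; case: existsP => // -[].
by exists h'; rewrite inE hh'.
Qed.

Lemma induced_labelling_le h g :
  induced_labelling h g <= 2 * \sum_(h' in N h) f (g, h').
Proof.
rewrite ffunE; case: existsP => // -[h' /andP [hh' f_gt0]].
by rewrite (bigD1 h') //= mulnDr (leq_trans _ (leq_addr _ _)) ?leq_pmulr.
Qed.

Lemma weight_pair : weight f = \sum_g \sum_h f (g, h).
Proof. by rewrite /weight pair_big /=; apply: eq_bigr => -[]. Qed.

Lemma card_open_packing_mul_gamma_tR (D : {set H}) :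
  is_TRDF f -> open_packing D -> #|D| * gamma_tR G <= 2 * weight f.
Proof.
move=> TRf opD; rewrite -sum_nat_const.
apply: (@leq_trans (\sum_(h in D) weight (induced_labelling h))).
  by apply: leq_sum => h _; apply/gamma_tR_le_weight/induced_labelling_TRDF.
apply: (@leq_trans (\sum_(h in D) \sum_g 2 * \sum_(h' in N h) f (g, h'))).
  by apply: leq_sum => h _; apply: leq_sum => g _; apply: induced_labelling_le.
rewrite exchange_big weight_pair big_distrr /=; apply: leq_sum => g _.
rewrite -big_distrr leq_mul2l /=.
exact: sum_open_packing_neighbourhoods.
Qed.

End InducedLabelling.

Definition swap_labelling (G H : sgraph) (f : {ffun gdprod G H -> 'I_3}) :
  {ffun gdprod H G -> 'I_3} := [ffun v => f (v.2, v.1)].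

Lemma swap_labelling_TRDF (G H : sgraph) (f : {ffun gdprod G H -> 'I_3}) :
  is_TRDF f -> is_TRDF (swap_labelling f).
Proof.
case/andP=> /forallP zero_dom /forallP pos_dom.
apply/andP; split; apply/forallP => -[h g]; rewrite ffunE /=; apply/implyP.
  move=> /(implyP (zero_dom (g, h))) /existsP [[g' h'] /andP [/andP [gg' hh'] fu]].
  by apply/existsP; exists (h', g'); rewrite ffunE /dprod_adj /= gg' hh'.
move=> /(implyP (pos_dom (g, h))) /existsP [[g' h'] /andP [/andP [gg' hh'] fu]].
by apply/existsP; exists (h', g'); rewrite ffunE /dprod_adj /= gg' hh'.
Qed.

Lemma weight_swap_labelling (G H : sgraph) (f : {ffun gdprod G H -> 'I_3}) :
  weight (swap_labelling f) = weight f.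
Proof.
rewrite !weight_pair exchange_big /=.
by apply: eq_bigr => g _; apply: eq_bigr => h _; rewrite ffunE.
Qed.

Lemma gamma_tR_dprod_swap_le (G H : sgraph) :
  gamma_tR (gdprod H G) <= gamma_tR (gdprod G H).
Proof.
have [-> | [f TRf ->]] := gamma_tR_attained (gdprod G H).
  by apply: leq_trans (gamma_tR_le_2card _) _; rewrite /= !card_prod (mulnC #|H|).
by rewrite -(weight_swap_labelling f) gamma_tR_le_weight ?swap_labelling_TRDF.
Qed.

Lemma gamma_tR_dprodC (G H : sgraph) :
  gamma_tR (gdprod G H) = gamma_tR (gdprod H G).
Proof. by apply/anti_leq; rewrite !gamma_tR_dprod_swap_le. Qed.

Lemma rho_o_mul_gamma_tR_le (G H : sgraph) :
  rho_o H * gamma_tR G <= 2 * gamma_tR (gdprod G H).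
Proof.
have [D opD ->] := rho_o_attained H.
have [-> | [f TRf ->]] := gamma_tR_attained (gdprod G H); last first.
  exact: card_open_packing_mul_gamma_tR.
apply: leq_trans (leq_mul (max_card D) (gamma_tR_le_2card G)) _.
by rewrite card_prod mulnCA leq_mul2l mulnC leq_pmull.
Qed.

Local Open Scope ring_scope.

Theorem theorem2p8 (G H : sgraph) :
  no_isolated G -> no_isolated H -> (3 <= #|G|)%N -> (3 <= #|H|)%N ->
  Num.max ((rho_o H)%:R * (gamma_tR G)%:R / 2 : rat)
          ((rho_o G)%:R * (gamma_tR H)%:R / 2)
  <= (gamma_tR (gdprod G H))%:R.
Proof.
(* The hypotheses are not needed: when no TRDF exists, [gamma_tR] takes its
   default value 2|V|, and the bounds above cover that case too. *)
move=> _ _ _ _.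
rewrite ge_max !ler_pdivrMr // -!natrM !ler_nat -!(mulnC 2).
by rewrite rho_o_mul_gamma_tR_le gamma_tR_dprodC rho_o_mul_gamma_tR_le.
Qed.
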